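(* For each integer $n\ge0$ let $\theta^\Delta_n(x)=\sum_{k=0}^n\frac{(n+k)!}{2^k(n-k)!\,k!}(x)_{n-k}$, where $(x)_j=x(x-1)\cdots(x-j+1)$ and $(x)_0=1$. Then for every $n\ge0$ and every $x\in\mathbb{C}$, \[ \theta^\Delta_{n+2}(x)-(2n+3)\theta^\Delta_{n+1}(x)-x(x-1)\theta^\Delta_n(x-2)=0 . \] *)

From mathcomp Require Import all_boot all_order all_algebra.
From mathcomp Require Import Rstruct.
From mathcomp Require Import complex.
Set Implicit Arguments. Unset Strict Implicit. Unset Printing Implicit Defensive.
Import GRing.Theory Num.Theory.
Local Open Scope ring_scope.

Definition C := complex Rdefinitions.R.

Definition falling (x : C) (j : nat) : C := \prod_(i < j) (x - i%:R).

Definition thetaD (n : nat) (x : C) : C :=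
  \sum_(k < n.+1)
    (((n + k)`!)%:R / ((2 ^ k)%:R * ((n - k)`!)%:R * (k`!)%:R)) * falling x (n - k).

From mathcomp Require Import all_boot all_order all_algebra.
From mathcomp Require Import Rstruct.
From mathcomp Require Import complex.
From mathcomp Require Import ring zify.
Import GRing.Theory Num.Theory.
Local Open Scope ring_scope.

(* The coefficient of [thetaD n] is ['C(n + k, 2k) (2k-1)!!], an integer which
   vanishes for [k > n], so all sums may be taken over the same range. The
   factor x(x-1) shifts (x-2)_j to (x)_(j+2), so the recurrence holds
   coefficientwise, where it follows from Pascal's rule and the absorption
   identity [mul_bin_left]. *)

Definition odd_dfact (k : nat) : nat := \prod_(i < k) i.*2.+1.

Lemma odd_dfactS k : odd_dfact k.+1 = (odd_dfact k * k.*2.+1)%N.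
Proof. by rewrite /odd_dfact big_ord_recr. Qed.

Lemma fact_double k : (k.*2)`! = (2 ^ k * k`! * odd_dfact k)%N.
Proof.
elim: k => [|k IHk]; first by rewrite /odd_dfact big_ord0.
rewrite doubleS !factS IHk odd_dfactS expnS; lia.
Qed.

Definition thetaD_coef (n k : nat) : nat := ('C(n + k, k.*2) * odd_dfact k)%N.

Lemma thetaD_coef_eq0 n k : (n < k)%N -> thetaD_coef n k = 0%N.
Proof. by move=> ltnk; rewrite /thetaD_coef bin_small ?mul0n //; lia. Qed.

Lemma thetaD_coef0 n : thetaD_coef n 0 = 1%N.
Proof. by rewrite /thetaD_coef /odd_dfact big_ord0 addn0 bin0. Qed.

Lemma thetaD_coefSS n k :
  thetaD_coef n.+2 k.+1 = ((2 * n + 3) * thetaD_coef n.+1 k + thetaD_coef n k.+1)%N.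
Proof.
rewrite /thetaD_coef !doubleS odd_dfactS.
have -> : (n.+2 + k.+1 = (n + k.+1).+2)%N by lia.
have -> : (n.+1 + k = n + k.+1)%N by lia.
set m := (n + k.+1)%N; rewrite !binS.
have pascal : (k.*2.+1 * ('C(m, k.*2.+1) + 'C(m, k.*2.+1) + 'C(m, k.*2))
               = (2 * n + 3) * 'C(m, k.*2))%N.
  have [lekn | ltnk] := leqP k n.+1; last by rewrite !bin_small /m; lia.
  have := mul_bin_left m k.*2; rewrite /m; nia.
by rewrite [((2 * n + 3) * _)%N]mulnA -pascal; ring.
Qed.

Lemma thetaD_coefE n k : (k <= n)%N ->
  ((n + k)`!%:R / ((2 ^ k)%:R * (n - k)`!%:R * k`!%:R) : C) = (thetaD_coef n k)%:R.
Proof.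
move=> lekn.
have factE : (n + k)`! = (thetaD_coef n k * (2 ^ k * (n - k)`! * k`!))%N.
  rewrite -(@bin_fact (n + k) k.*2); last by lia.
  rewrite fact_double (_ : (n + k - k.*2 = n - k)%N); last by lia.
  rewrite /thetaD_coef; ring.
rewrite -!natrM factE natrM mulfK //.
by rewrite pnatr_eq0 -lt0n !muln_gt0 expn_gt0 !fact_gt0.
Qed.

Lemma thetaDE n x : thetaD n x = \sum_(k < n.+1) (thetaD_coef n k)%:R * falling x (n - k).
Proof. by apply: eq_bigr => k _; rewrite thetaD_coefE // -ltnS. Qed.

Lemma fallingS x j : falling x j.+1 = x * falling (x - 1) j.
Proof.
rewrite /falling big_ord_recl subr0; congr (_ * _).
by apply: eq_bigr => i _; rewrite lift0 /= mulrS; ring.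
Qed.

Lemma falling_shift2 x j : x * (x - 1) * falling (x - 2) j = falling x j.+2.
Proof.
have -> : x - 2 = x - 1 - 1 by ring.
by rewrite !fallingS mulrA.
Qed.

Lemma shifted_thetaDE n x : x * (x - 1) * thetaD n (x - 2) =
  \sum_(k < n.+3) (thetaD_coef n k)%:R * falling x (n.+2 - k).
Proof.
rewrite 2!big_ord_recr /= !thetaD_coef_eq0 // !mul0r !addr0.
rewrite thetaDE mulr_sumr; apply: eq_bigr => k _.
rewrite mulrCA falling_shift2 (_ : ((n - k).+2 = n.+2 - k)%N) //.
by have := ltn_ord k; lia.
Qed.

Lemma thetaD_recurrence n x : thetaD n.+2 x =
  (2 * n + 3)%:R * thetaD n.+1 x + x * (x - 1) * thetaD n (x - 2).
Proof.
rewrite thetaDE big_ord_recl shifted_thetaDE [in RHS]big_ord_recl thetaDE.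
rewrite !thetaD_coef0 addrCA mulr_sumr -big_split /=; congr (_ + _).
apply: eq_bigr => k _.
by rewrite /bump leq0n add1n thetaD_coefSS natrD natrM mulrDl mulrA.
Qed.

Theorem mainTheorem13 (n : nat) (x : C) :
  thetaD n.+2 x - (2 * n + 3)%:R * thetaD n.+1 x
    - x * (x - 1) * thetaD n (x - 2) = 0.
Proof. by rewrite thetaD_recurrence addrAC addrK subrr. Qed.
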